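(* Consider the sovereign default economy described in the context, with lenders' constant (non-stochastic) per-period endowment $\bar z = z$, and suppose $\{c^{\ast},c^{L,\ast},B^{\ast},b^{\ast},m_R^{\ast},m_A^{\ast},\delta^{\ast}\}$, $\{V_R^{\ast},V_A^{\ast},W_R^{\ast},W_A^{\ast}\}$, a perceived law of motion $\Gamma$ and a price function $q$ form a recursive equilibrium of this economy. Then for any other constant lenders' endowment $\hat z \neq z$, there exists a recursive equilibrium of the economy with $\bar z=\hat z$ (all other primitives unchanged) having the identical bond price function $q$ and identical borrower allocations (consumption $c^{\ast}$, bond policy $B^{\ast}$ and default decisions $\delta^{\ast}$).
   Context: Time is discrete. Let $(Y_t)$ be a Markov chain on a finite set $\mathbb{Y}\subseteq\mathbb{R}_+$ with transition matrix $P_{Y'|Y}$, and let $(X_t)$ be i.i.d. on $\mathbb{X}=[\underline x,\bar x]$ with a Lebesgue density, independent of $(Y_t)$; $W_t=(X_t,Y_t)\in\mathbb{W}=\mathbb{X}\times\mathbb{Y}$ and the borrower's endowment at $t$ is $y_t+x_t$. $E_Y[\cdot\mid y]$ and $E_X[\cdot]$ denote expectations under $P_{Y'|Y}(\cdot\mid y)$ and under the law of $X$. A long-term bond is traded: each period a fraction $\lambda\in(0,1]$ matures and a coupon $\psi$ is paid on the remaining fraction $1-\lambda$. Bond holdings lie in a bounded set $\mathbb{B}\subseteq\mathbb{R}$. A price function is $q:\mathbb{Y}\times\mathbb{B}\to\mathbb{R}_+$. Borrower: period utility $u$ strictly increasing, strictly concave, satisfying Inada conditions; discount factor $\beta\in(0,1)$;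 re-entry probability $\pi\in(0,1)$; output cost $\phi:\mathbb{Y}\to\mathbb{Y}$ with $\phi(y)\le y$. Values: $V(w,B)=\max\{V_A(\underline x,y),V_R(w,B)\}$; $V_R(w,B)=\max_{B'\in\mathbb{B}}\{u(c)+\beta E[V(W',B')\mid w]\}$ with $c=y+x-q(y,B')(B'-(1-\lambda)B)+(\lambda+(1-\lambda)\psi)B$; $V_A(w)=u(y+x-\phi(y))+\beta E[(1-\pi)V_A(W')+\pi V(W',0)\mid w]$; default indicator $\delta(w,B)=\mathbf{1}\{V_R(w,B)\ge V_A(\underline x,y)\}$ (1 = repay). Lenders (a continuum of measure one, atomistic, price takers): discount factor $\gamma\in(0,1)$, robustness parameter $\theta\in(\underline\theta,+\infty]$, constant endowment $\bar z$. Let $\mathcal{M}=\{g:\mathbb{Y}\to\mathbb{R}_+:\sum_{y'}g(y')P_{Y'|Y}(y'\mid y)=1\ \forall y\}$ and, for $g\in\mathcal M$, $\mathcal{E}[g](y)=E_Y[g(Y')\log g(Y')\mid y]$. Given a perceived law of motion $\Gamma:\mathbb{W}\times\mathbb{B}\to\mathbb{B}$ for aggregate debt, $W_R(w,B,b)=\min_{m\in\mathcal M}\max_{c^L,b'}\{c^L+\theta\gamma\mathcal E[m](y)+\gamma E_Y[m(Y')\mathcal W(Y',B',b')\mid y]\}$ subject to $c^L=\bar z+q(y,B')(b'-(1-\lambda)b)-(\lambda+(1-\lambda)\psi)b$ and $B'=\Gamma(w,B)$, where $\mathcal W(y',B',b')=E_X[W(y',X',B',b')]$ and $W(w',B',b')=\delta(w',B')W_R(w',B',b')+(1-\delta(w',B'))W_A(y')$;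 and $W_A(y)=\min_{m\in\mathcal M}\{\bar z+\theta\gamma\mathcal E[m](y)+\gamma E_Y[m(Y')((1-\pi)W_A(Y')+\pi\mathcal W(Y',0,0))\mid y]\}$. A recursive equilibrium is a collection of policy functions (borrower consumption $c^{\ast}$ and bonds $B^{\ast}:\mathbb W\times\mathbb B\to\mathbb B$, lender consumption $c^{L,\ast}$ and bonds $b^{\ast}:\mathbb W\times\mathbb B^2\to\mathbb B$, distortions $m_R^{\ast}:\mathbb W\times\mathbb B^2\to\mathcal M$, $m_A^{\ast}:\mathbb Y\to\mathcal M$, default decisions $\delta^{\ast}:\mathbb W\times\mathbb B\to\{0,1\}$), value functions $V_R^{\ast},V_A^{\ast},W_R^{\ast},W_A^{\ast}$, a perceived law of motion $\Gamma$ and a price function $q$ such that: (1) the policies, distortions and values solve the borrower's and individual lender's problems above; (2) markets clear: $B^{\ast}(w,B)=b^{\ast}(w,B,B)$ for all $(w,B)$; (3) $B^{\ast}(w,B)=\Gamma(w,B)$ for all $(w,B)$. *)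

From HB Require Import structures.
From mathcomp Require Import all_boot all_order all_algebra.
From mathcomp Require Import all_classical all_reals all_analysis.
Set Implicit Arguments. Unset Strict Implicit. Unset Printing Implicit Defensive.
Import Order.TTheory GRing.Theory Num.Theory.
Import numFieldNormedType.Exports.
Local Open Scope classical_set_scope.
Local Open Scope ring_scope.

(* Y is the finite state space of the Markov chain (Y_t), embedded in R by [yv].
   Transition probabilities: [P y y'] = P_{Y'|Y}(y' | y).
   X_t is i.i.d. on [xl, xh] with Lebesgue density [fX].
   Functions on bonds are written as functions on R; all conditions are
   imposed only on arguments in [Bset] (and x in [xl,xh]). *)
Record economy (R : realType) (Y : finType) := Economy {
  yv : Y -> R;
  P : Y -> Y -> R;
  xl : R; xh : R;
  fX : R -> R;
  lam : R; psi : R;            (* maturity fraction, coupon *)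
  Bset : set R;
  u : R -> R; beta : R; pi_ : R; phi : Y -> Y;   (* borrower *)
  gam : R; thlow : R; theta : \bar R; zbar : R   (* lenders *)
}.

Section Model.
Context {R : realType} {Y : finType} (e : economy R Y).

Let xl := xl e. Let xh := xh e.

Definition primitives_ok : Prop :=
  injective (yv e) /\ (forall y, 0 <= yv e y) /\
  (forall y y', 0 <= P e y y') /\ (forall y, \sum_(y' : Y) P e y y' = 1) /\
  measurable_fun `[xl, xh] (fX e) /\ (forall x, 0 <= fX e x) /\
  (\int[lebesgue_measure]_(x in `[xl, xh]) (fX e x)%:E = 1)%E /\
  0 < lam e <= 1 /\
  (* 𝔹 is bounded (and contains 0, which is used in V(W',0)) *)
  (exists M : R, forall b, Bset e b -> `|b| <= M) /\ Bset e 0 /\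
  (forall a b, 0 < a -> a < b -> u e a < u e b) /\
  (forall a b t, 0 < a -> 0 < b -> a != b -> 0 < t < 1 ->
      t * u e a + (1 - t) * u e b < u e (t * a + (1 - t) * b)) /\
  (forall c, 0 < c -> derivable (u e) c 1) /\
  (derive1 (u e) c @[c --> 0^'+] --> +oo) /\
  (derive1 (u e) c @[c --> +oo] --> 0) /\
  0 < beta e < 1 /\ 0 < pi_ e < 1 /\ (forall y, yv e (phi e y) <= yv e y) /\
  0 < gam e < 1 /\ ((thlow e)%:E < theta e)%E.

Definition EX (g : R -> R) : R :=
  Rintegral lebesgue_measure `[xl, xh] (fun x => g x * fX e x).
Definition intX (g : R -> R) : Prop :=
  lebesgue_measure.-integrable `[xl, xh] (fun x => (g x * fX e x)%:E).

Definition EY (y : Y) (h : Y -> R) : R := \sum_(y' : Y) P e y y' * h y'.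

Definition inM (g : Y -> R) : Prop :=
  (forall y', 0 <= g y') /\ (forall y, \sum_(y' : Y) g y' * P e y y' = 1).
Definition ent (g : Y -> R) (y : Y) : R := EY y (fun y' => g y' * ln (g y')).

(* A candidate recursive equilibrium; x, y stand for w = (x, y). *)
Record eq_obj := EqObj {
  cB : R -> Y -> R -> R;
  BB : R -> Y -> R -> R;
  cL : R -> Y -> R -> R -> R;
  bL : R -> Y -> R -> R -> R;
  mR : R -> Y -> R -> R -> Y -> R;
  mA : Y -> Y -> R;
  dlt : R -> Y -> R -> bool;        (* δ*(w,B), true = repay *)
  VR : R -> Y -> R -> R;
  VA : R -> Y -> R;
  WR : R -> Y -> R -> R -> R;
  WA : Y -> R;
  Gam : R -> Y -> R -> R;
  q : Y -> R -> R
}.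

Variable s : eq_obj.

Definition inX (x : R) : Prop := xl <= x <= xh.

Definition Vfun (x : R) (y : Y) (B : R) : R := Num.max (VA s xl y) (VR s x y B).
Definition consB (x : R) (y : Y) (B B' : R) : R :=
  yv e y + x - q s y B' * (B' - (1 - lam e) * B) + (lam e + (1 - lam e) * psi e) * B.
Definition contV (y : Y) (B' : R) : R := EY y (fun y' => EX (fun x' => Vfun x' y' B')).

Definition borrower_optimal : Prop :=
  (forall y' B', Bset e B' -> intX (fun x' => Vfun x' y' B')) /\
  (forall y', intX (fun x' => VA s x' y')) /\
  (forall x y B, inX x -> Bset e B ->
     (* repayment problem: V_R = max over B' ∈ 𝔹 (u defined on c > 0) *)
     [/\ Bset e (BB s x y B),
         cB s x y B = consB x y B (BB s x y B) /\ 0 < cB s x y B,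
         VR s x y B = u e (cB s x y B) + beta e * contV y (BB s x y B),
         (forall B', Bset e B' -> 0 < consB x y B B' ->
             u e (consB x y B B') + beta e * contV y B' <= VR s x y B) &
         dlt s x y B = (VA s xl y <= VR s x y B)]) /\
  (forall x y, inX x ->
     VA s x y = u e (yv e y + x - yv e (phi e y)) +
       beta e * EY y (fun y' => EX (fun x' => (1 - pi_ e) * VA s x' y' + pi_ e * Vfun x' y' 0))).

Definition consL (y : Y) (B' b b' : R) : R :=
  zbar e + q s y B' * (b' - (1 - lam e) * b) - (lam e + (1 - lam e) * psi e) * b.
Definition Wfun (x : R) (y : Y) (B b : R) : R :=
  if dlt s x y B then WR s x y B b else WA s y.
Definition calW (y : Y) (B b : R) : R := EX (fun x => Wfun x y B b).

Definition JR (x : R) (y : Y) (B b : R) (m : Y -> R) (b' : R) : \bar R :=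
  ((consL y (Gam s x y B) b b' + gam e * EY y (fun y' => m y' * calW y' (Gam s x y B) b'))%:E
   + theta e * (gam e * ent m y)%:E)%E.
Definition JA (y : Y) (m : Y -> R) : \bar R :=
  ((zbar e + gam e * EY y (fun y' => m y' * ((1 - pi_ e) * WA s y' + pi_ e * calW y' 0 0)))%:E
   + theta e * (gam e * ent m y)%:E)%E.

Definition lender_optimal : Prop :=
  (forall y' B' b', Bset e B' -> Bset e b' -> intX (fun x => Wfun x y' B' b')) /\
  (forall x y B b, inX x -> Bset e B -> Bset e b ->
     [/\ Bset e (bL s x y B b) /\ inM (mR s x y B b),
         cL s x y B b = consL y (Gam s x y B) b (bL s x y B b),
         (WR s x y B b)%:E = JR x y B b (mR s x y B b) (bL s x y B b),
         (forall b', Bset e b' -> (JR x y B b (mR s x y B b) b' <=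
                                   JR x y B b (mR s x y B b) (bL s x y B b))%E) &
         (* m_R* solves the outer min of the (attained) inner max *)
         (forall m, inM m -> exists2 bm, Bset e bm &
            (forall b', Bset e b' -> (JR x y B b m b' <= JR x y B b m bm)%E) /\
            ((WR s x y B b)%:E <= JR x y B b m bm)%E)]) /\
  (forall y, inM (mA s y) /\ (WA s y)%:E = JA y (mA s y) /\
     (forall m, inM m -> (JA y (mA s y) <= JA y m)%E)).

Definition recursive_equilibrium : Prop :=
  (forall y B, Bset e B -> 0 <= q s y B) /\
  (forall x y B, inX x -> Bset e B -> Bset e (Gam s x y B)) /\
  borrower_optimal /\ lender_optimal /\
  (forall x y B, inX x -> Bset e B -> BB s x y B = bL s x y B B) /\
  (forall x y B, inX x -> Bset e B -> BB s x y B = Gam s x y B).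

End Model.

Definition with_zbar {R : realType} {Y : finType} (e : economy R Y) (z : R) : economy R Y :=
  Economy (yv e) (P e) (xl e) (xh e) (fX e) (lam e) (psi e) (Bset e) (u e) (beta e)
          (pi_ e) (phi e) (gam e) (thlow e) (theta e) z.

(** Lenders are risk neutral in consumption and the endowment [zbar] enters
    their problems only additively, so raising it by [d] raises [c^L] by [d]
    and every lender value by the constant [K = d / (1 - gam)], the fixed point
    of [K = d + gam K].  Since every distortion [m] in 𝓜 integrates to one
    under [P], a constant shift of the continuation values passes through the
    distorted expectation, so all lender objectives move by the same constant
    and their maximisers and minimisers are unchanged.  Prices and the
    borrower's problem do not involve [zbar] at all. *)
From HB Require Import structures.
From mathcomp Require Import all_boot all_order all_algebra.
From mathcomp Require Import all_classical all_reals all_analysis.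
From mathcomp Require Import ring lra.
Set Implicit Arguments. Unset Strict Implicit. Unset Printing Implicit Defensive.
Import Order.TTheory GRing.Theory Num.Theory.
Import numFieldNormedType.Exports.
Local Open Scope classical_set_scope.
Local Open Scope ring_scope.

Section ConstantShift.
Context {R : realType} {Y : finType} (e : economy R Y).

Section Density.
Hypothesis pok : primitives_ok e.

Lemma fX_integrable :
  lebesgue_measure.-integrable `[xl e, xh e] (fun x => (fX e x)%:E).
Proof.
case: pok => _ [_ [_ [_ [mf [f0 [i1 _]]]]]].
apply/integrableP; split; first exact/measurable_realfun.measurable_EFinP.
under eq_integral => x _ do rewrite gee0_abs ?lee_fin ?f0 //.
by rewrite i1 ltry.
Qed.

Lemma Rintegral_fX : Rintegral lebesgue_measure `[xl e, xh e] (fX e) = 1.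
Proof. by case: pok => _ [_ [_ [_ [_ [_ [i1 _]]]]]]; rewrite /Rintegral i1. Qed.

Lemma intX_addr (g : R -> R) (K : R) :
  intX e g -> intX e (fun x => g x + K).
Proof.
move=> ig; rewrite /intX.
have -> : (fun x => ((g x + K) * fX e x)%:E) =
    ((fun x => (g x * fX e x)%:E) \+ (fun x => K%:E * (fX e x)%:E))%E.
  by apply/funext => x /=; rewrite mulrDl EFinD EFinM.
by apply: integrableD => //; apply: integrableZl => //; exact: fX_integrable.
Qed.

Lemma EX_addr (g : R -> R) (K : R) :
  intX e g -> EX e (fun x => g x + K) = EX e g + K.
Proof.
move=> ig; rewrite /EX.
under eq_Rintegral => x _ do rewrite mulrDl.
have iK : lebesgue_measure.-integrable `[xl e, xh e] (fun x => (K * fX e x)%:E).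
  have : lebesgue_measure.-integrable `[xl e, xh e] (fun x => K%:E * (fX e x)%:E)%E.
    by apply: integrableZl; [exact: measurable_itv | exact: fX_integrable].
  by apply: eq_integrable; [exact: measurable_itv | move=> x _ /=; rewrite EFinM].
rewrite RintegralD // RintegralZl //; last exact: fX_integrable.
by rewrite Rintegral_fX mulr1.
Qed.

End Density.

Lemma EY_mul_addr (y : Y) (m c : Y -> R) (K : R) : inM e m ->
  EY e y (fun y' => m y' * (c y' + K)) = EY e y (fun y' => m y' * c y') + K.
Proof.
case=> _ /(_ y) m1.
rewrite /EY -[K in RHS]mulr1 -m1 mulr_sumr -big_split /=.
by apply: eq_bigr => y' _; ring.
Qed.

End ConstantShift.

Definition shift_lender_values {R : realType} {Y : finType}
    (s : @eq_obj R Y) (d K : R) : @eq_obj R Y :=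
  EqObj (cB s) (BB s) (fun x y B b => cL s x y B b + d) (bL s) (mR s) (mA s)
    (dlt s) (VR s) (VA s) (fun x y B b => WR s x y B b + K) (fun y => WA s y + K)
    (Gam s) (q s).

Section EndowmentShift.
Context {R : realType} {Y : finType} (e : economy R Y) (s : @eq_obj R Y).
Variables zh K : R.
Hypothesis pok : primitives_ok e.
Hypothesis K_fixed : zh - zbar e + gam e * K = K.
Hypothesis Gam_Bset : forall x y B, inX e x -> Bset e B -> Bset e (Gam s x y B).
Hypothesis W_integrable : forall y B b, Bset e B -> Bset e b ->
  intX e (fun x => Wfun s x y B b).

Let e' := with_zbar e zh.
Let s' := shift_lender_values s (zh - zbar e) K.

Lemma Wfun_shift x y B b : Wfun s' x y B b = Wfun s x y B b + K.
Proof. by rewrite /Wfun /=; case: (dlt s x y B). Qed.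

Lemma intX_Wfun_shift y B b : Bset e B -> Bset e b ->
  intX e' (fun x => Wfun s' x y B b).
Proof.
move=> hB hb; under [X in intX _ X]funext => x do rewrite Wfun_shift.
exact: intX_addr (W_integrable y hB hb).
Qed.

Lemma calW_shift y B b : Bset e B -> Bset e b ->
  calW e' s' y B b = calW e s y B b + K.
Proof.
move=> hB hb; rewrite /calW -(EX_addr pok _ (W_integrable y hB hb)).
by congr (EX _ _); apply/funext => x; exact: Wfun_shift.
Qed.

Lemma JR_shift x y B b m b' : inX e x -> Bset e B -> Bset e b' -> inM e m ->
  JR e' s' x y B b m b' = (JR e s x y B b m b' + K%:E)%E.
Proof.
move=> hx hB hb' hm; rewrite /JR.
have -> : EY e' y (fun y' => m y' * calW e' s' y' (Gam s' x y B) b')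
    = EY e y (fun y' => m y' * calW e s y' (Gam s x y B) b') + K.
  rewrite -(EY_mul_addr y _ K hm); apply: eq_bigr => y' _ /=.
  by rewrite calW_shift //; exact: Gam_Bset.
rewrite /= -addeAC -EFinD; congr (_%:E + _)%E.
by rewrite /consL /= -[in RHS]K_fixed; ring.
Qed.

Lemma JA_shift y m : Bset e 0 -> inM e m ->
  JA e' s' y m = (JA e s y m + K%:E)%E.
Proof.
move=> B0 hm; rewrite /JA.
have -> : EY e' y (fun y' => m y' * ((1 - pi_ e') * WA s' y' + pi_ e' * calW e' s' y' 0 0))
    = EY e y (fun y' => m y' * ((1 - pi_ e) * WA s y' + pi_ e * calW e s y' 0 0)) + K.
  rewrite -(EY_mul_addr y _ K hm); apply: eq_bigr => y' _ /=.
  by rewrite calW_shift //=; ring.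
rewrite /= -addeAC -EFinD; congr (_%:E + _)%E.
by rewrite -[in RHS]K_fixed; ring.
Qed.

Lemma lender_optimal_shift : lender_optimal e s -> lender_optimal e' s'.
Proof.
have B0 : Bset e 0 by case: pok => _ [_ [_ [_ [_ [_ [_ [_ [_ [? _]]]]]]]]].
move=> [_ [optR optA]]; split; [|split].
- by move=> y B b hB hb; exact: intX_Wfun_shift.
- move=> x y B b hx hB hb.
  have [[hbL hmR] hcL hWR bL_max mR_min] := optR x y B b hx hB hb.
  split.
  + by split.
  + by rewrite /= hcL /consL /=; ring.
  + by rewrite JR_shift // -hWR EFinD.
  + by move=> b' hb'; rewrite !JR_shift //; apply: leeD2r; exact: bL_max.
  + move=> m hm; have [bm hbm [bm_max WR_le]] := mR_min m hm.
    exists bm => //; split.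
    * by move=> b' hb'; rewrite !JR_shift //; apply: leeD2r; exact: bm_max.
    * by rewrite JR_shift // /= EFinD; apply: leeD2r.
- move=> y; have [hmA [hWA mA_min]] := optA y.
  split; [exact: hmA | split].
  + by rewrite JA_shift // /= EFinD hWA.
  + by move=> m hm; rewrite !JA_shift //; apply: leeD2r; exact: mA_min.
Qed.

End EndowmentShift.

Theorem lemma1 (R : realType) (Y : finType) (e : economy R Y) (s : @eq_obj R Y) :
  primitives_ok e ->
  recursive_equilibrium e s ->
  forall zh : R, zh <> zbar e ->
  exists s' : @eq_obj R Y,
    recursive_equilibrium (with_zbar e zh) s' /\
    q s' = q s /\ cB s' = cB s /\ BB s' = BB s /\ dlt s' = dlt s.
Proof.
move=> pok [q_ge0 [Gam_Bset [bor [len [clearing consistent]]]]] zh _.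
have gam_lt1 : gam e < 1.
  by case: pok => _ [_ [_ [_ [_ [_ [_ [_ [_ [_ [_ [_ [_ [_ [_ [_ [_ [_ [/andP[_ ?] _]]]]]]]]]]]]]]]]]].
set K := (zh - zbar e) / (1 - gam e).
have K_fixed : zh - zbar e + gam e * K = K by rewrite /K; field; lra.
exists (shift_lender_values s (zh - zbar e) K); split; last by [].
do 3 (split; first by []).
split; last by split.
by apply: lender_optimal_shift => //; case: len.
Qed.
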